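(* For all $N_1,N_2\ge0$, the multiplication morphism $\mathfrak m_{N_1,N_2}:\mathcal M(N_1,K)\times\mathcal M(N_2,K)\to\mathcal M(N_1+N_2,K)$ is dominant.
   Context: $\mathcal M(N,K)=\mathrm{Rep}(N,K)/\!/\mathrm{GL}_N$, with $\mathrm{Rep}(N,K)$ the triples $(B,\psi,\overline\psi)$, $B\in\mathrm{Mat}_{N\times N}(\mathbb C)$, $\psi\in\mathrm{Mat}_{N\times K}$, $\overline\psi\in\mathrm{Mat}_{K\times N}$, and $g\cdot(B,\psi,\overline\psi)=(gBg^{-1},g\psi,\overline\psi g^{-1})$. $\mathfrak m_{N_1,N_2}$ sends $(B^{(1)},\psi^{(1)},\overline\psi^{(1)})\times(B^{(2)},\psi^{(2)},\overline\psi^{(2)})$ to $\left(\begin{bmatrix}B^{(1)}&\psi^{(1)}\overline\psi^{(2)}\\-\psi^{(2)}\overline\psi^{(1)}&B^{(2)}\end{bmatrix},\begin{bmatrix}\psi^{(1)}\\\psi^{(2)}\end{bmatrix},\begin{bmatrix}\overline\psi^{(1)}&\overline\psi^{(2)}\end{bmatrix}\right)$. *)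

From HB Require Import structures.
From mathcomp Require Import all_boot all_order all_algebra.
From mathcomp Require Import complex.
From mathcomp Require Import Rstruct.
From mathcomp Require Import mpoly.
From Stdlib Require Import Reals.
Set Implicit Arguments. Unset Strict Implicit. Unset Printing Implicit Defensive.
Import Order.TTheory GRing.Theory Num.Theory.
Local Open Scope ring_scope.

Definition C : closedFieldType := (Rdefinitions.R)[i].

(* Rep(N,K): triples (B, psi, psibar) *)
Definition Rep (N K : nat) : Type :=
  ('M[C]_N * 'M[C]_(N, K) * 'M[C]_(K, N))%type.

Definition repdim (N K : nat) : nat := (N * N + N * K + K * N)%N.

Definition rep_coords (N K : nat) (x : Rep N K) : 'I_(repdim N K) -> C :=
  fun i => (row_mx (row_mx (mxvec x.1.1) (mxvec x.1.2)) (mxvec x.2)) ord0 i.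

(* regular functions on Rep(N,K): polynomials in the coordinates *)
Definition rep_eval (N K : nat) (f : {mpoly C[repdim N K]}) (x : Rep N K) : C :=
  f.@[rep_coords x].

Definition rep_act (N K : nat) (g : 'M[C]_N) (x : Rep N K) : Rep N K :=
  (g *m x.1.1 *m invmx g, g *m x.1.2, x.2 *m invmx g).

(* GL_N-invariant polynomials: the coordinate ring C[Rep(N,K)]^{GL_N}
   of the affine GIT quotient M(N,K) = Rep(N,K)//GL_N *)
Definition gl_invariant (N K : nat) (f : {mpoly C[repdim N K]}) : Prop :=
  forall (g : 'M[C]_N), g \in unitmx -> forall x : Rep N K,
    rep_eval f (rep_act g x) = rep_eval f x.

Definition rep_mult (N1 N2 K : nat) (x1 : Rep N1 K) (x2 : Rep N2 K) :
  Rep (N1 + N2) K :=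
  (block_mx x1.1.1 (x1.1.2 *m x2.2) (- (x2.1.2 *m x1.2)) x2.1.1,
   col_mx x1.1.2 x2.1.2,
   row_mx x1.2 x2.2).

(* Dominance of the induced morphism M(N1,K) x M(N2,K) -> M(N1+N2,K):
   its image is Zariski dense, i.e. every regular function on M(N1+N2,K)
   (= GL-invariant polynomial on Rep(N1+N2,K)) vanishing on the image is 0. *)
Definition mult_dominant (N1 N2 K : nat) : Prop :=
  forall f : {mpoly C[repdim (N1 + N2) K]}, gl_invariant f ->
    (forall (x1 : Rep N1 K) (x2 : Rep N2 K), rep_eval f (rep_mult x1 x2) = 0) ->
    f = 0.

From mathcomp Require Import all_boot all_algebra.
From mathcomp Require Import complex Rstruct mpoly spectral mxred.
From mathcomp Require Import ring.
Set Implicit Arguments. Unset Strict Implicit. Unset Printing Implicit Defensive.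
Import GRing.Theory Num.Theory.
Local Open Scope ring_scope.

(* Put P = B + psi psibar and Q = B - psi psibar; GL_N acts on both by
   conjugation, and a point lies in the image of m_{N1,N2} as soon as the
   upper-right block of Q and the lower-left block of P vanish.  Hence a point
   is GL-equivalent to one in the image whenever Q has an N1-dimensional
   left-invariant subspace (triangularize Q) with a P-left-invariant
   complement (complete it by left eigenvectors of P, if P is diagonalizable).
   So an invariant f vanishing on the image vanishes wherever P is
   diagonalizable.  For P triangular, P + t diag(0, 1, ..., N-1) has distinct
   eigenvalues for all but finitely many t, so f vanishes everywhere and is
   the zero polynomial. *)

Lemma poly_eq0_of_eval (R : numDomainType) (p : {poly R}) :
  (forall t, p.[t] = 0) -> p = 0.
Proof.
move=> p0; apply: (@roots_geq_poly_eq0 _ _ [seq i%:R | i <- iota 0 (size p)]).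
- by apply/allP => t _; rewrite /root p0.
- by rewrite map_inj_uniq ?iota_uniq // => i j /eqP; rewrite eqr_nat => /eqP.
- by rewrite size_map size_iota.
Qed.

Lemma poly_eq0_of_eval_off_roots (R : numDomainType) (p r : {poly R}) :
  r != 0 -> (forall t, ~~ root r t -> p.[t] = 0) -> p = 0.
Proof.
move=> r0 pr; suff /eqP : p * r = 0 by rewrite mulf_eq0 (negPf r0) orbF => /eqP.
apply: poly_eq0_of_eval => t; rewrite hornerM.
by have [/eqP ->|/pr ->] := boolP (root r t); rewrite ?mulr0 ?mul0r.
Qed.

Lemma base_expansion_inj n d (a b : 'I_n -> nat) :
  (forall i, a i < d)%N -> (forall i, b i < d)%N ->
  (\sum_(i < n) a i * d ^ i = \sum_(i < n) b i * d ^ i)%N -> a =1 b.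
Proof.
elim: n a b => [|n IH] a b ad bd; first by move=> _ [].
have expand (c : 'I_n.+1 -> nat) : (\sum_(i < n.+1) c i * d ^ i =
    c ord0 + (\sum_(i < n) c (lift ord0 i) * d ^ i) * d)%N.
  rewrite big_ord_recl expn0 muln1 big_distrl /=; congr (_ + _)%N.
  by apply: eq_bigr => i _; rewrite /bump /= add1n expnS mulnCA mulnC.
rewrite !expand => E.
have d_gt0 : (0 < d)%N by apply: leq_ltn_trans (ad ord0).
have head : a ord0 = b ord0.
  by have := congr1 (modn^~ d) E; rewrite !(addnC (_ ord0)) !modnMDl !modn_small.
have tail : (\sum_(i < n) a (lift ord0 i) * d ^ i =
             \sum_(i < n) b (lift ord0 i) * d ^ i)%N.
  have := congr1 (divn^~ d) E.
  by rewrite !(addnC (_ ord0)) !divnMDl // !divn_small // !addn0.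
have {}tail := IH _ _ (fun i => ad _) (fun i => bd _) tail.
by move=> i; case: (unliftP ord0 i) => [j ->|->].
Qed.

(* Kronecker substitution: for d above every exponent of f, the monomials of
   f are sent by [X_i := t ^ d ^ i] to pairwise distinct powers of t. *)
Lemma mpoly_eq0_of_eval (R : numDomainType) n (f : {mpoly R[n]}) :
  (forall v, f.@[v] = 0) -> f = 0.
Proof.
move=> f0; pose d := msize f.
pose e (m : 'X_{1..n}) := (\sum_(i < n) m i * d ^ i)%N.
pose p : {poly R} := \sum_(m <- msupp f) f@_m *: 'X^(e m).
have p0 : p = 0.
  apply: poly_eq0_of_eval => t; rewrite -(f0 (fun i => t ^+ (d ^ i))) mevalE.
  rewrite horner_sum; apply: eq_bigr => m _; rewrite hornerZ hornerXn -prodrXr.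
  by congr (_ * _); apply: eq_bigr => i _; rewrite -exprM mulnC.
have small m i : m \in msupp f -> (m i < d)%N.
  move=> /msize_mdeg_lt; apply: leq_ltn_trans.
  by rewrite mdegE (bigD1 i) //= leq_addr.
apply/mpolyP => m; rewrite mcoeff0.
have [fm|] := boolP (m \in msupp f); last exact: memN_msupp_eq0.
have := congr1 (fun q : {poly R} => q`_(e m)) p0.
rewrite coef0 coef_sum (bigD1_seq m) ?msupp_uniq //= coefZ coefXn eqxx mulr1.
rewrite big_seq_cond big1 ?addr0 // => m' /andP[fm' m'm]; rewrite coefZ coefXn.
have [/base_expansion_inj eq_m|] := eqVneq (e m') (e m); last by rewrite mulr0.
by case/eqP: m'm; apply/mnmP => i; apply: eq_m => j; apply: small.
Qed.

Lemma meval_line (R : comNzRingType) n (f : {mpoly R[n]}) (a b : 'I_n -> R) :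
  exists p : {poly R}, forall t, p.[t] = f.@[fun i => a i + t * b i].
Proof.
exists (\sum_(m <- msupp f) f@_m *: \prod_i ((a i)%:P + b i *: 'X) ^+ m i).
move=> t; rewrite mevalE horner_sum; apply: eq_bigr => m _.
rewrite hornerZ horner_prod; congr (_ * _); apply: eq_bigr => i _.
by rewrite horner_exp hornerD hornerC hornerZ hornerX mulrC.
Qed.

Lemma col_mx_rowsub_unit (F : fieldType) m k (M : 'M[F]_(m, m + k))
    (E : 'M[F]_(m + k)) : row_free M -> E \in unitmx ->
  exists c : 'I_k -> 'I_(m + k), col_mx M (rowsub c E) \in unitmx.
Proof.
move=> freeM unitE; pose Pi := cokermx M.
have rankEPi : \rank (E *m Pi) = k.
  by rewrite eqmxMfull ?row_full_unit // mxrank_coker (eqP freeM) addKn.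
have [c freec] : exists c : 'I_k -> 'I_(m + k), row_free (rowsub c (E *m Pi)).
  have := maxrowsub_free (E *m Pi); move: (maxrankfun _); rewrite rankEPi.
  by move=> c freec; exists c.
exists c; rewrite -row_free_unit; apply/inj_row_free => v.
rewrite -[v]hsubmxK mul_row_col => vMc0.
have v2_0 : rsubmx v = 0.
  apply: (row_free_inj freec); rewrite mul0mx -mul_rowsub_mx mulmxA.
  have := congr1 (mulmx^~ Pi) vMc0.
  by rewrite mulmxDl -mulmxA mulmx_coker mulmx0 add0r mul0mx.
have v1_0 : lsubmx v = 0.
  by apply: (row_free_inj freeM); move: vMc0; rewrite v2_0 mul0mx addr0 mul0mx.
by rewrite v1_0 v2_0 row_mx0.
Qed.

Lemma row_free_usubmx (F : fieldType) m1 m2 n (W : 'M[F]_(m1 + m2, n)) :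
  row_free W -> row_free (usubmx W).
Proof.
move=> freeW; apply/inj_row_free => v vW0.
have /(row_free_inj freeW)/eqP : row_mx v 0 *m W = 0 *m W.
  by rewrite -[W in LHS]vsubmxK mul_row_col vW0 !mul0mx addr0.
by rewrite row_mx_eq0 => /andP[/eqP].
Qed.

Lemma trigonalizable_numClosed (F : numClosedFieldType) n (A : 'M[F]_n) :
  trigonalizable A.
Proof.
case: n A => [|n] A.
  by exists 1%:M; rewrite ?unitmx1 //; apply/is_trig_mxP => -[].
by have [U /unitarymx_unit] := Schur A isT; exists U.
Qed.

Lemma trig_diagonalizable (F : fieldType) n (T : 'M[F]_n) :
  is_trig_mx T -> injective (fun i => T i i) -> diagonalizable T.
Proof.
case: n T => [|n] T trigT injT.
  by rewrite (flatmx0 T); apply: diagonalizable0.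
apply/diagonalizableP; exists [seq T i i | i <- enum 'I_n.+1].
  by rewrite map_inj_uniq ?enum_uniq.
apply: dvdp_trans (mxminpoly_dvd_char T) _.
by rewrite char_poly_trig // big_map big_enum.
Qed.

Lemma trig_shift_diagonalizable (F : numFieldType) n (T : 'M[F]_n) :
  is_trig_mx T -> exists2 r : {poly F}, r != 0 &
    forall t, ~~ root r t -> diagonalizable (T + t *: diag_mx (\row_i (i : nat)%:R)).
Proof.
move=> trigT; have /is_trig_mxP T_upper0 := trigT.
(* r vanishes exactly where two diagonal entries T i i + t i of the shifted
   matrix collide. *)
pose r : {poly F} := \prod_(i < n) \prod_(j < n | i != j)
  ((T i i - T j j)%:P + ((i : nat)%:R - (j : nat)%:R) *: 'X).
exists r.
  apply/prodf_neq0 => i _; apply/prodf_neq0 => j ij.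
  apply: contraNneq ij => /(congr1 (fun q : {poly F} => q`_1)).
  rewrite coefD coefC coefZ coefX add0r mulr1 coef0 => /eqP.
  by rewrite subr_eq0 eqr_nat => /eqP /val_inj ->.
move=> t rt; apply: trig_diagonalizable.
  apply/is_trig_mxP => i j ij; rewrite !mxE T_upper0 //.
  by rewrite -val_eqE (ltn_eqF ij) mulr0n mulr0 addr0.
move=> i j /=; rewrite !mxE !eqxx !mulr1n => eq_ij; apply/eqP/contraT => ij.
move: rt; rewrite /root !horner_prod => /prodf_neq0 /(_ i isT).
rewrite horner_prod => /prodf_neq0 /(_ j ij).
rewrite hornerD hornerC hornerZ hornerX.
have -> : T i i - T j j + (i%:R - j%:R) * t =
  (T i i + t * i%:R) - (T j j + t * j%:R) by ring.
by rewrite eq_ij subrr eqxx.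
Qed.

Lemma rep_coords_surj N K (v : 'I_(repdim N K) -> C) :
  exists x : Rep N K, rep_coords x =1 v.
Proof.
pose r : 'rV[C]_(repdim N K) := \row_i v i.
exists (vec_mx (lsubmx (lsubmx r)), vec_mx (rsubmx (lsubmx r)), vec_mx (rsubmx r)).
by move=> i; rewrite /rep_coords /= !vec_mxK !hsubmxK mxE.
Qed.

Lemma rep_eval_shift_poly N K (f : {mpoly C[repdim N K]}) (x : Rep N K)
    (D : 'M[C]_N) :
  exists p : {poly C}, forall t, p.[t] = rep_eval f (x.1.1 + t *: D, x.1.2, x.2).
Proof.
have [p p_line] := meval_line f (rep_coords x) (rep_coords (D, 0, 0)).
exists p => t; rewrite p_line /rep_eval; apply: meval_eq => i.
rewrite /rep_coords /=.
have -> : row_mx (row_mx (mxvec (x.1.1 + t *: D)) (mxvec x.1.2)) (mxvec x.2) =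
    row_mx (row_mx (mxvec x.1.1) (mxvec x.1.2)) (mxvec x.2) +
    t *: row_mx (row_mx (mxvec D) (mxvec (0 : 'M_(N, K)))) (mxvec (0 : 'M_(K, N))).
  by rewrite !scale_row_mx !add_row_mx linearD linearZ /= !raddf0 !addr0.
by rewrite !mxE.
Qed.

Definition rep_plus N K (x : Rep N K) : 'M[C]_N := x.1.1 + x.1.2 *m x.2.
Definition rep_minus N K (x : Rep N K) : 'M[C]_N := x.1.1 - x.1.2 *m x.2.

Lemma rep_plus_act N K g (x : Rep N K) :
  rep_plus (rep_act g x) = g *m rep_plus x *m invmx g.
Proof. by rewrite /rep_plus /= mulmxDr mulmxDl !mulmxA. Qed.

Lemma rep_minus_act N K g (x : Rep N K) :
  rep_minus (rep_act g x) = g *m rep_minus x *m invmx g.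
Proof. by rewrite /rep_minus /= mulmxBr mulmxBl !mulmxA. Qed.

Lemma rep_plus_shift N K (x : Rep N K) (D : 'M[C]_N) :
  rep_plus (x.1.1 + D, x.1.2, x.2) = rep_plus x + D.
Proof. by rewrite /rep_plus addrAC. Qed.

Lemma rep_mult_of_blocks N1 N2 K (y : Rep (N1 + N2) K) :
  ursubmx (rep_minus y) = 0 -> dlsubmx (rep_plus y) = 0 ->
  exists x1 x2, y = rep_mult x1 x2.
Proof.
case: y => [[B a] b]; rewrite /rep_minus /rep_plus /= => ur0 dl0.
exists (ulsubmx B, usubmx a, lsubmx b), (drsubmx B, dsubmx a, rsubmx b).
have ab : a *m b = block_mx (usubmx a *m lsubmx b) (usubmx a *m rsubmx b)
                            (dsubmx a *m lsubmx b) (dsubmx a *m rsubmx b).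
  by rewrite -{1}(vsubmxK a) -{1}(hsubmxK b) mul_col_row.
rewrite /rep_mult /= vsubmxK hsubmxK -{1}(submxK B); congr (block_mx _ _ _ _, _, _).
- move/eqP: ur0; rewrite ab -{1}(submxK B) opp_block_mx add_block_mx.
  by rewrite block_mxKur subr_eq0 => /eqP.
- move/eqP: dl0; rewrite ab -{1}(submxK B) add_block_mx block_mxKdl.
  by rewrite addr_eq0 => /eqP.
Qed.

Lemma rep_act_mult_image N1 N2 K (x : Rep (N1 + N2) K)
    (H1 : 'M[C]_(N1, N1 + N2)) (H2 : 'M[C]_(N2, N1 + N2))
    (A1 : 'M[C]_N1) (A2 : 'M[C]_N2) :
    col_mx H1 H2 \in unitmx ->
    H1 *m rep_minus x = A1 *m H1 -> H2 *m rep_plus x = A2 *m H2 ->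
  exists x1 x2, rep_act (col_mx H1 H2) x = rep_mult x1 x2.
Proof.
set h := col_mx H1 H2 => unit_h minusH1 plusH2.
have usub_h p (M : 'M_(N1 + N2, p)) : usubmx (h *m M) = H1 *m M.
  by rewrite -mul_usub_mx col_mxKu.
have dsub_h p (M : 'M_(N1 + N2, p)) : dsubmx (h *m M) = H2 *m M.
  by rewrite -mul_dsub_mx col_mxKd.
have H1V : H1 *m invmx h = row_mx 1%:M 0.
  by rewrite -usub_h mulmxV // scalar_mx_block /block_mx col_mxKu.
have H2V : H2 *m invmx h = row_mx 0 1%:M.
  by rewrite -dsub_h mulmxV // scalar_mx_block /block_mx col_mxKd.
apply: rep_mult_of_blocks.
- rewrite rep_minus_act /ursubmx -mulmxA usub_h mulmxA minusH1 -mulmxA H1V.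
  by rewrite mul_mx_row mulmx0 row_mxKr.
- rewrite rep_plus_act /dlsubmx -mulmxA dsub_h mulmxA plusH2 -mulmxA H2V.
  by rewrite mul_mx_row mulmx0 row_mxKl.
Qed.

Lemma eval_eq0_of_diagonalizable N1 N2 K (f : {mpoly C[repdim (N1 + N2) K]}) :
    gl_invariant f -> (forall x1 x2, rep_eval f (@rep_mult N1 N2 K x1 x2) = 0) ->
  forall x, diagonalizable (rep_plus x) -> rep_eval f x = 0.
Proof.
move=> invf f_mult x [E unitE /similar_diagPex [d /(similarP unitE) plusE]].
have [W unitW] := trigonalizable_numClosed (rep_minus x).
rewrite /similar_to conjumx //; set L := W *m _ *m _ => trigL.
have minusH1 : usubmx W *m rep_minus x = ulsubmx L *m usubmx W.
  rewrite mul_usub_mx -[W *m _](mulmxKV unitW) -/L -mul_usub_mx.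
  rewrite -[usubmx L]hsubmxK -/(ursubmx L) -/(ulsubmx L) (ursubmx_trig _ trigL) //.
  by rewrite -{1}(vsubmxK W) mul_row_col mul0mx addr0.
have freeH1 : row_free (usubmx W) by apply: row_free_usubmx; rewrite row_free_unit.
have [c unitH] := col_mx_rowsub_unit freeH1 unitE.
have plusH2 : rowsub c E *m rep_plus x = diag_mx (\row_k d 0 (c k)) *m rowsub c E.
  by rewrite mul_rowsub_mx plusE; apply/matrixP => i j; rewrite !mul_diag_mx !mxE.
have [x1 [x2 eq_x]] := rep_act_mult_image unitH minusH1 plusH2.
by rewrite -(invf _ unitH x) eq_x f_mult.
Qed.

Theorem mainTheorem10 (N1 N2 K : nat) : mult_dominant N1 N2 K.
Proof.
move=> f invf f_mult; apply: mpoly_eq0_of_eval => v.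
have [x xv] := rep_coords_surj v.
rewrite -(meval_eq f xv) -/(rep_eval f x).
have [U unitU] := trigonalizable_numClosed (rep_plus x).
rewrite /similar_to conjumx // -rep_plus_act => trig_y.
rewrite -(invf _ unitU x).
set y := rep_act U x in trig_y *.
have [r r0 diag_shift] := trig_shift_diagonalizable trig_y.
have [p p_shift] := rep_eval_shift_poly f y (diag_mx (\row_i (i : nat)%:R)).
suff p0 : p = 0.
  have := p_shift 0; rewrite p0 horner0 scale0r addr0.
  by case: (y) => [[B a] b] /esym.
apply: (poly_eq0_of_eval_off_roots r0) => t /diag_shift.
rewrite -rep_plus_shift => /(eval_eq0_of_diagonalizable invf f_mult) <-.
exact: p_shift.
Qed.
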